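(* Let $T\in L_{aut}(\mathcal B)$ be generalized hyperbolic with splitting $\mathcal B=E^-\oplus E^+$, and let $x\in\mathcal B$ satisfy $T^kx=x$ for some integer $k\ge1$. Then there is $v\in T^k(E^-)\cap E^+$ such that $x=\sum_{n\in\mathbb Z}T^{nk}v$, the series converging absolutely.
   Context: $\mathcal B$ is a Banach space. $T$ is generalized hyperbolic if there is a decomposition $\mathcal B=E^-\oplus E^+$ into complementary closed subspaces with $T(E^+)\subset E^+$, $T^{-1}(E^-)\subset E^-$, and $T|_{E^+}$, $T^{-1}|_{E^-}$ uniform contractions (there are $C\ge1$, $\lambda\in(0,1)$ with $|T^nx|\le C\lambda^n|x|$ on $E^+$ and $|T^{-n}x|\le C\lambda^n|x|$ on $E^-$ for $n\ge0$). *)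

From Stdlib Require Import Reals Lra ZArith.
Open Scope R_scope.

Record Banach := MkBanach {
  bcar :> Type;
  bzero : bcar;
  badd : bcar -> bcar -> bcar;
  bopp : bcar -> bcar;
  bscal : R -> bcar -> bcar;
  bnorm : bcar -> R;
  badd_assoc : forall x y z, badd x (badd y z) = badd (badd x y) z;
  badd_comm : forall x y, badd x y = badd y x;
  badd_0 : forall x, badd x bzero = x;
  badd_opp : forall x, badd x (bopp x) = bzero;
  bscal_1 : forall x, bscal 1 x = x;
  bscal_assoc : forall a b x, bscal a (bscal b x) = bscal (a * b) x;
  bscal_distr_l : forall a x y, bscal a (badd x y) = badd (bscal a x) (bscal a y);
  bscal_distr_r : forall a b x, bscal (a + b) x = badd (bscal a x) (bscal b x);
  bnorm_nonneg : forall x, 0 <= bnorm x;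
  bnorm_eq0 : forall x, bnorm x = 0 -> x = bzero;
  bnorm_scal : forall a x, bnorm (bscal a x) = Rabs a * bnorm x;
  bnorm_triangle : forall x y, bnorm (badd x y) <= bnorm x + bnorm y;
  bcomplete : forall u : nat -> bcar,
    (forall eps, 0 < eps -> exists N, forall m n, (N <= m)%nat -> (N <= n)%nat ->
        bnorm (badd (u m) (bopp (u n))) < eps) ->
    exists l, forall eps, 0 < eps -> exists N, forall n, (N <= n)%nat ->
        bnorm (badd (u n) (bopp l)) < eps
}.

Arguments bzero {b0}. Arguments badd {b0}. Arguments bopp {b0}.
Arguments bscal {b0}. Arguments bnorm {b0}.

Definition seq_lim {B : Banach} (u : nat -> B) (l : B) : Prop :=
  forall eps, 0 < eps -> exists N, forall n, (N <= n)%nat -> bnorm (badd (u n) (bopp l)) < eps.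

Definition bounded_linear {B : Banach} (T : B -> B) : Prop :=
  (forall x y, T (badd x y) = badd (T x) (T y)) /\
  (forall a x, T (bscal a x) = bscal a (T x)) /\
  (exists C, forall x, bnorm (T x) <= C * bnorm x).

Definition L_aut {B : Banach} (T Tinv : B -> B) : Prop :=
  bounded_linear T /\ bounded_linear Tinv /\
  (forall x, T (Tinv x) = x) /\ (forall x, Tinv (T x) = x).

Definition closed_subspace {B : Banach} (E : B -> Prop) : Prop :=
  E bzero /\ (forall x y, E x -> E y -> E (badd x y)) /\
  (forall a x, E x -> E (bscal a x)) /\
  (forall u l, (forall n, E (u n)) -> seq_lim u l -> E l).

Definition complementary {B : Banach} (Em Ep : B -> Prop) : Prop :=
  closed_subspace Em /\ closed_subspace Ep /\
  (forall x, Em x -> Ep x -> x = bzero) /\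
  (forall x, exists a b, Em a /\ Ep b /\ x = badd a b).

Definition zpow {B : Banach} (T Tinv : B -> B) (z : Z) : B -> B :=
  match z with
  | Z0 => fun x => x
  | Zpos p => Nat.iter (Pos.to_nat p) T
  | Zneg p => Nat.iter (Pos.to_nat p) Tinv
  end.

Definition gen_hyperbolic {B : Banach} (T Tinv : B -> B) (Em Ep : B -> Prop) : Prop :=
  complementary Em Ep /\
  (forall x, Ep x -> Ep (T x)) /\
  (forall x, Em x -> Em (Tinv x)) /\
  exists C lam, 1 <= C /\ 0 < lam < 1 /\
    (forall (n : nat) x, Ep x -> bnorm (Nat.iter n T x) <= C * lam ^ n * bnorm x) /\
    (forall (n : nat) x, Em x -> bnorm (Nat.iter n Tinv x) <= C * lam ^ n * bnorm x).

Fixpoint bsum {B : Banach} (f : nat -> B) (N : nat) : B :=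
  match N with
  | O => bzero
  | S n => badd (bsum f n) (f n)
  end.

(* the bi-infinite series sum_{n in Z} w n converges absolutely with sum x:
   both one-sided series of norms converge and the symmetric partial sums
   sum_{n=-N}^{N} w n tend to x *)
Definition abs_sum_Z {B : Banach} (w : Z -> B) (x : B) : Prop :=
  (exists s, Un_cv (sum_f_R0 (fun n => bnorm (w (Z.of_nat n)))) s) /\
  (exists s, Un_cv (sum_f_R0 (fun n => bnorm (w (- Z.of_nat (S n))%Z))) s) /\
  seq_lim (fun N => badd (bsum (fun n => w (Z.of_nat n)) (S N))
                         (bsum (fun n => w (- Z.of_nat (S n))%Z) N)) x.

(* Split x = a + b with a in E^- and b in E^+.  Since T^k is additive and
   T^k x = x, the vector v := b - T^k b equals T^k a - a = T^k y with
   y := a - T^{-k} a in E^-; so v lies in T^k(E^-) and in E^+.  The orbit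
   terms of v then telescope on each side:
     T^{nk} v      = T^{nk} b - T^{(n+1)k} b          (n >= 0),
     T^{-(m+1)k} v = T^{-mk} a - T^{-(m+1)k} a        (m >= 0),
   so the symmetric partial sums equal x - T^{(N+1)k} b - T^{-Nk} a, whose
   error is at most C (|a| + |b|) lam^N by the uniform contraction on E^+
   (for T) and on E^- (for T^{-1}).  The same contraction estimates bound
   the norms of the orbit terms by a geometric sequence, giving absolute
   convergence. *)

From Stdlib Require Import Reals ZArith Lra Lia.
Open Scope R_scope.

Local Notation bsub x y := (badd x (bopp y)).

Lemma add0l (B : Banach) (x : B) : badd bzero x = x.
Proof. rewrite badd_comm; apply badd_0. Qed.

Lemma addoppl (B : Banach) (x : B) : badd (bopp x) x = bzero.
Proof. rewrite badd_comm; apply badd_opp. Qed.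

Lemma add_cancel_r (B : Banach) (x y z : B) : badd x z = badd y z -> x = y.
Proof.
  intro H. rewrite <- (badd_0 _ x), <- (badd_0 _ y), <- (badd_opp _ z).
  rewrite !badd_assoc, H. reflexivity.
Qed.

Lemma scal0 (B : Banach) (x : B) : bscal 0 x = bzero.
Proof.
  apply (add_cancel_r _ _ _ (bscal 0 x)). rewrite add0l, <- bscal_distr_r.
  f_equal; ring.
Qed.

Lemma opp_scal (B : Banach) (x : B) : bopp x = bscal (-1) x.
Proof.
  apply (add_cancel_r _ _ _ x). rewrite addoppl.
  rewrite <- (bscal_1 _ x) at 2. rewrite <- bscal_distr_r.
  replace (-1 + 1) with 0 by ring. symmetry; apply scal0.
Qed.

Lemma norm_opp (B : Banach) (x : B) : bnorm (bopp x) = bnorm x.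
Proof. rewrite opp_scal, bnorm_scal, Rabs_left by lra; ring. Qed.

Lemma opp_add (B : Banach) (x y : B) : bopp (badd x y) = badd (bopp x) (bopp y).
Proof. rewrite !opp_scal; apply bscal_distr_l. Qed.

Lemma add_ACA (B : Banach) (x y z w : B) :
  badd (badd x y) (badd z w) = badd (badd x z) (badd y w).
Proof.
  rewrite <- !badd_assoc. f_equal. rewrite !badd_assoc. f_equal. apply badd_comm.
Qed.

Lemma subK (B : Banach) (x y : B) : badd (bsub x y) y = x.
Proof. rewrite <- badd_assoc, addoppl; apply badd_0. Qed.

Lemma sub_swap (B : Banach) (p q r s : B) :
  badd p q = badd r s -> bsub p r = bsub s q.
Proof.
  intro H. apply add_cancel_r with (badd r q).
  rewrite badd_assoc, subK, (badd_comm _ r q), badd_assoc, subK, H.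
  apply badd_comm.
Qed.

Lemma sub_sum_cancel (B : Banach) (a b g h : B) :
  bsub (badd (bsub b g) (bsub a h)) (badd a b) = badd (bopp g) (bopp h).
Proof.
  rewrite add_ACA, opp_add.
  rewrite <- badd_assoc, (badd_comm _ (badd (bopp g) (bopp h))), badd_assoc.
  rewrite (badd_comm _ (bopp a)), (add_ACA _ b a (bopp b) (bopp a)).
  rewrite !badd_opp, badd_0, add0l. reflexivity.
Qed.

Lemma sub_closed (B : Banach) (E : B -> Prop) x y :
  closed_subspace E -> E x -> E y -> E (bsub x y).
Proof.
  intros [_ [Ha [Hs _]]] Hx Hy. apply Ha; auto. rewrite opp_scal; auto.
Qed.

Lemma pow_antimono (l : R) m n : 0 <= l <= 1 -> (m <= n)%nat -> l ^ n <= l ^ m.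
Proof.
  intros Hl Hmn. induction Hmn. lra.
  simpl. assert (0 <= l ^ m0) by (apply pow_le; lra). nra.
Qed.

Lemma series_cv_geometric_dominated (f : nat -> R) M lam : 0 < lam < 1 ->
  (forall n, 0 <= f n <= M * lam ^ n) -> exists s, Un_cv (sum_f_R0 f) s.
Proof.
  intros Hlam Hf.
  destruct (Rseries_CV_comp f (fun n => M * lam ^ n) Hf) as [s Hs].
  - exists (M * / (1 - lam)).
    apply Un_cv_ext with (fun N => M * sum_f_R0 (fun n => 1 * lam ^ n) N).
    { intro n. rewrite scal_sum. apply sum_eq. intros; ring. }
    apply CV_mult with (An := fun _ => M).
    { intros e He; exists O; intros; rewrite Rdist_eq; lra. }
    apply GP_infinite. rewrite Rabs_pos_eq; lra.
  - exists s. exact Hs.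
Qed.

Lemma geometric_eventually_small K lam : 0 <= K -> 0 < lam < 1 ->
  forall eps, 0 < eps -> exists N, forall n, (N <= n)%nat -> K * lam ^ n < eps.
Proof.
  intros HK Hlam eps Heps.
  destruct (pow_lt_1_zero lam ltac:(rewrite Rabs_pos_eq; lra) (eps / (K + 1)))
    as [N HN]. { apply Rdiv_lt_0_compat; lra. }
  exists N. intros n Hn. specialize (HN n Hn).
  rewrite Rabs_pos_eq in HN by (apply pow_le; lra).
  assert (0 <= lam ^ n) by (apply pow_le; lra).
  apply Rmult_lt_compat_l with (r := K + 1) in HN; [|lra].
  replace ((K + 1) * (eps / (K + 1))) with eps in HN by (field; lra). nra.
Qed.

Lemma bsum_ext (B : Banach) (f g : nat -> B) N :
  (forall n, f n = g n) -> bsum f N = bsum g N.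
Proof. intro H; induction N; simpl; auto; rewrite IHN, H; auto. Qed.

Lemma bsum_telescope (B : Banach) (g : nat -> B) N :
  bsum (fun n => bsub (g n) (g (S n))) N = bsub (g O) (g N).
Proof.
  induction N; simpl. { symmetry; apply badd_opp. }
  rewrite IHN, <- badd_assoc. f_equal. rewrite badd_assoc, addoppl, add0l. auto.
Qed.

Definition additive {B : Banach} (f : B -> B) : Prop :=
  (forall x y, f (badd x y) = badd (f x) (f y)) /\ (forall x, f (bopp x) = bopp (f x)).

Lemma bounded_linear_additive (B : Banach) (T : B -> B) :
  bounded_linear T -> additive T.
Proof.
  intros [Hadd [Hscal _]]. split; auto. intro x. rewrite !opp_scal. apply Hscal.
Qed.

Lemma iter_additive (B : Banach) (f : B -> B) n :
  additive f -> additive (Nat.iter n f).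
Proof.
  intros [Hadd Hopp]. induction n as [|n [IHadd IHopp]]; split; intros; simpl; auto.
  - rewrite IHadd; auto.
  - rewrite IHopp; auto.
Qed.

Lemma iter_cancel (B : Banach) (f g : B -> B) n x :
  (forall x, g (f x) = x) -> Nat.iter n g (Nat.iter n f x) = x.
Proof.
  intro H. induction n; auto.
  rewrite (Nat.iter_succ_r n _ g). simpl Nat.iter at 2. rewrite H. auto.
Qed.

Lemma iter_invariant (B : Banach) (f : B -> B) (E : B -> Prop) n x :
  (forall x, E x -> E (f x)) -> E x -> E (Nat.iter n f x).
Proof. intros H Hx; induction n; simpl; auto. Qed.

Lemma iter_coboundary (B : Banach) (f : B -> B) k n c :
  additive f ->
  Nat.iter (n * k) f (bsub c (Nat.iter k f c))
  = bsub (Nat.iter (n * k) f c) (Nat.iter (S n * k) f c).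
Proof.
  intro Hf. destruct (iter_additive B f (n * k) Hf) as [Hadd Hopp].
  rewrite Hadd, Hopp, Nat.mul_succ_l, Nat.iter_add. reflexivity.
Qed.

Lemma iter_mul_contraction (B : Banach) (f : B -> B) (E : B -> Prop) C lam k :
  0 <= C -> 0 < lam < 1 -> (1 <= k)%nat ->
  (forall (n : nat) z, E z -> bnorm (Nat.iter n f z) <= C * lam ^ n * bnorm z) ->
  forall n z, E z -> bnorm (Nat.iter (n * k) f z) <= C * bnorm z * lam ^ n.
Proof.
  intros HC Hlam Hk Hcontr n z Hz.
  assert (lam ^ (n * k) <= lam ^ n) by (apply pow_antimono; [lra | nia]).
  assert (0 <= C * bnorm z) by (pose proof (bnorm_nonneg _ z); nra).
  eapply Rle_trans; [apply Hcontr; auto|]. nra.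
Qed.

Lemma zpow_nat (B : Banach) (T Tinv : B -> B) j x :
  zpow T Tinv (Z.of_nat j) x = Nat.iter j T x.
Proof. destruct j; simpl; auto. rewrite SuccNat2Pos.id_succ. auto. Qed.

Lemma zpow_opp_nat (B : Banach) (T Tinv : B -> B) j x :
  zpow T Tinv (- Z.of_nat j) x = Nat.iter j Tinv x.
Proof. destruct j; simpl; auto. rewrite SuccNat2Pos.id_succ. auto. Qed.

Lemma zpow_mul_pos (B : Banach) (T Tinv : B -> B) n k x :
  zpow T Tinv (Z.of_nat n * Z.of_nat k) x = Nat.iter (n * k) T x.
Proof. rewrite <- Nat2Z.inj_mul. apply zpow_nat. Qed.

Lemma zpow_mul_neg (B : Banach) (T Tinv : B -> B) m k y :
  (forall x, Tinv (T x) = x) ->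
  zpow T Tinv (- Z.of_nat (S m) * Z.of_nat k) (Nat.iter k T y)
  = Nat.iter (m * k) Tinv y.
Proof.
  intro HTinv. rewrite Z.mul_opp_l, <- Nat2Z.inj_mul, zpow_opp_nat.
  rewrite Nat.mul_succ_l, Nat.iter_add, iter_cancel; auto.
Qed.

Section PeriodicOrbit.

Variables (B : Banach) (T Tinv : B -> B) (Em Ep : B -> Prop) (C lam : R) (k : nat).
Variables (a b : B).

Hypotheses (T_add : additive T) (Tinv_add : additive Tinv).
Hypotheses (T_Tinv : forall x, T (Tinv x) = x) (Tinv_T : forall x, Tinv (T x) = x).
Hypotheses (Em_closed : closed_subspace Em) (Ep_closed : closed_subspace Ep).
Hypotheses (Ep_T : forall x, Ep x -> Ep (T x)) (Em_Tinv : forall x, Em x -> Em (Tinv x)).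
Hypotheses (C_nonneg : 0 <= C) (lam_range : 0 < lam < 1) (k_pos : (1 <= k)%nat).
Hypothesis Ep_contr :
  forall (n : nat) x, Ep x -> bnorm (Nat.iter n T x) <= C * lam ^ n * bnorm x.
Hypothesis Em_contr :
  forall (n : nat) x, Em x -> bnorm (Nat.iter n Tinv x) <= C * lam ^ n * bnorm x.
Hypotheses (a_Em : Em a) (b_Ep : Ep b).
Hypothesis periodic : Nat.iter k T (badd a b) = badd a b.

Let y : B := bsub a (Nat.iter k Tinv a).
Let v : B := Nat.iter k T y.
Let w (z : Z) : B := zpow T Tinv (z * Z.of_nat k) v.

Lemma y_Em : Em y.
Proof. apply sub_closed; auto. apply iter_invariant; auto. Qed.

(* Periodicity turns T^k a - a into the coboundary b - T^k b. *)
Lemma v_coboundary : v = bsub b (Nat.iter k T b).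
Proof.
  destruct (iter_additive B T k T_add) as [Hadd Hopp].
  unfold v, y. rewrite Hadd, Hopp, iter_cancel by auto.
  apply sub_swap. rewrite <- Hadd. exact periodic.
Qed.

Lemma v_Ep : Ep v.
Proof.
  rewrite v_coboundary. apply sub_closed; auto. apply iter_invariant; auto.
Qed.

Lemma forward_term n :
  w (Z.of_nat n) = bsub (Nat.iter (n * k) T b) (Nat.iter (S n * k) T b).
Proof. unfold w. rewrite zpow_mul_pos, v_coboundary. apply iter_coboundary; auto. Qed.

Lemma backward_term m :
  w (- Z.of_nat (S m)) = bsub (Nat.iter (m * k) Tinv a) (Nat.iter (S m * k) Tinv a).
Proof. unfold w, v. rewrite zpow_mul_neg by auto. apply iter_coboundary; auto. Qed.

Lemma forward_norms_cv : exists s, Un_cv (sum_f_R0 (fun n => bnorm (w (Z.of_nat n)))) s.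
Proof.
  apply series_cv_geometric_dominated with (M := C * bnorm v) (lam := lam); auto.
  intro n. split; [apply bnorm_nonneg|]. unfold w. rewrite zpow_mul_pos.
  apply (iter_mul_contraction B T Ep); auto. apply v_Ep.
Qed.

Lemma backward_norms_cv :
  exists s, Un_cv (sum_f_R0 (fun n => bnorm (w (- Z.of_nat (S n))))) s.
Proof.
  apply series_cv_geometric_dominated with (M := C * bnorm y) (lam := lam); auto.
  intro n. split; [apply bnorm_nonneg|]. unfold w, v. rewrite zpow_mul_neg by auto.
  apply (iter_mul_contraction B Tinv Em); auto. apply y_Em.
Qed.

Lemma partial_sum_error N :
  bsub (badd (bsum (fun n => w (Z.of_nat n)) (S N)) (bsum (fun n => w (- Z.of_nat (S n))) N))
       (badd a b)
  = badd (bopp (Nat.iter (S N * k) T b)) (bopp (Nat.iter (N * k) Tinv a)).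
Proof.
  rewrite (bsum_ext _ _ _ _ forward_term), (bsum_ext _ _ _ _ backward_term).
  rewrite (bsum_telescope B (fun n => Nat.iter (n * k) T b)).
  rewrite (bsum_telescope B (fun n => Nat.iter (n * k) Tinv a)).
  apply sub_sum_cancel.
Qed.

Lemma partial_sums_cv :
  seq_lim (fun N => badd (bsum (fun n => w (Z.of_nat n)) (S N))
                         (bsum (fun n => w (- Z.of_nat (S n))) N)) (badd a b).
Proof.
  intros eps Heps.
  assert (HK : 0 <= C * (bnorm a + bnorm b))
    by (pose proof (bnorm_nonneg _ a); pose proof (bnorm_nonneg _ b); nra).
  destruct (geometric_eventually_small _ lam HK lam_range eps Heps) as [N HN].
  exists N. intros n Hn. rewrite partial_sum_error.
  eapply Rle_lt_trans; [apply bnorm_triangle|]. rewrite !norm_opp.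
  eapply Rle_lt_trans; [|apply (HN n Hn)].
  pose proof (iter_mul_contraction B T Ep C lam k C_nonneg lam_range k_pos Ep_contr (S n) b b_Ep).
  pose proof (iter_mul_contraction B Tinv Em C lam k C_nonneg lam_range k_pos Em_contr n a a_Em).
  assert (lam ^ S n <= lam ^ n) by (apply pow_antimono; [lra | lia]).
  assert (0 <= C * bnorm b) by (pose proof (bnorm_nonneg _ b); nra).
  nra.
Qed.

Theorem periodic_orbit_expansion : Em y /\ Ep v /\ abs_sum_Z w (badd a b).
Proof.
  split; [apply y_Em|]. split; [apply v_Ep|].
  split; [apply forward_norms_cv|]. split; [apply backward_norms_cv|].
  apply partial_sums_cv.
Qed.

End PeriodicOrbit.

Theorem mainTheorem19 (B : Banach) (T Tinv : B -> B) (Em Ep : B -> Prop)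
  (x : B) (k : nat) :
  L_aut T Tinv ->
  gen_hyperbolic T Tinv Em Ep ->
  (1 <= k)%nat ->
  Nat.iter k T x = x ->
  exists v : B,
    (exists y, Em y /\ v = Nat.iter k T y) /\ Ep v /\
    abs_sum_Z (fun n : Z => zpow T Tinv (n * Z.of_nat k)%Z v) x.
Proof.
  intros [HT [HTinv [HTTinv HTinvT]]] [Hsplit [HEp [HEm [C [lam HC]]]]] Hk Hx.
  destruct HC as [HC [Hlam [HcontrEp HcontrEm]]].
  destruct Hsplit as [HclEm [HclEp [_ Hdecomp]]].
  destruct (Hdecomp x) as [a [b [Ha [Hb ->]]]].
  pose (y := bsub a (Nat.iter k Tinv a)).
  destruct (periodic_orbit_expansion B T Tinv Em Ep C lam k a b
              (bounded_linear_additive B T HT) (bounded_linear_additive B Tinv HTinv)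
              HTTinv HTinvT HclEm HclEp HEp HEm ltac:(lra) Hlam Hk
              HcontrEp HcontrEm Ha Hb Hx) as [Hy [Hv Hsum]].
  exists (Nat.iter k T y). split; [exists y; auto|]. auto.
Qed.
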